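(* Let $h>0$ satisfy $L_eh^2\le1/9$, where $L_e=L+2\epsilon\tilde L$. Then for all $(x,v),(y,u)\in\mathbb{R}^{Nd}\times\mathbb{R}^{Nd}$, $$\sum_{\ell=1}^N\sup_{0\le s\le h}\big|\!\big|\!\big|(q^\ell_s(x,v),p^\ell_s(x,v))-(q^\ell_s(y,u),p^\ell_s(y,u))\big|\!\big|\!\big|^2\le(1+7L_e^{1/2}h)\sum_{\ell=1}^N\big|\!\big|\!\big|(x^\ell-y^\ell,v^\ell-u^\ell)\big|\!\big|\!\big|^2.$$
   Context: Standing assumptions: $\epsilon\ge0$; $V:\mathbb{R}^d\to\mathbb{R}$, $W:\mathbb{R}^d\times\mathbb{R}^d\to\mathbb{R}$ are $C^1$, $\nabla_1W$ the gradient in the first argument, constants $L>0$, $\tilde L\ge0$ with: (a) $V(0)=0$, $V\ge0$; (b) $|\nabla V(x)-\nabla V(y)|\le L|x-y|$; (d) $W$ symmetric, $|\nabla_1W(x,y)-\nabla_1W(\tilde x,\tilde y)|\le\tilde L(|x-\tilde x|+|y-\tilde y|)$. Points of $\mathbb{R}^{Nd}$: $x=(x^1,\dots,x^N)$. $U(x)=\sum_i\big(V(x^i)+\frac\epsilon{2N}\sum_jW(x^i,x^j)\big)$, $\nabla_iU=\partial U/\partial x^i$. Exact flow $(q_t,p_t)(x,v)$: $\dot q^i_t=p^i_t$, $\dot p^i_t=-\nabla_iU(q_t)$, $(q_0,p_0)=(x,v)$. For $(a,b)\in\mathbb{R}^{2d}$, $|\!|\!|(a,b)|\!|\!|^2=|a|^2+L_e^{-1}|b|^2$.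 *)

From HB Require Import structures.
From mathcomp Require Import all_boot all_order all_algebra.
From mathcomp Require Import all_classical all_reals all_analysis.
Set Implicit Arguments. Unset Strict Implicit. Unset Printing Implicit Defensive.
Import Order.TTheory GRing.Theory Num.Theory.
Import numFieldNormedType.Exports.
Local Open Scope classical_set_scope.
Local Open Scope ring_scope.

(* Points of R^d are row vectors 'rV[R]_d; points of R^{Nd} are N x d
   matrices whose i-th row is the i-th particle x^i. *)

Definition sqnorm {R : realType} {d : nat} (a : 'rV[R]_d) : R :=
  \sum_(k < d) (a 0 k) ^+ 2.
Definition enorm {R : realType} {d : nat} (a : 'rV[R]_d) : R :=
  Num.sqrt (sqnorm a).

Definition grad {R : realType} {d : nat} (f : 'rV[R]_d -> R) (x : 'rV[R]_d)
  : 'rV[R]_d := \row_(k < d) ('D_(delta_mx 0 k) f x).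

Definition grad1 {R : realType} {d : nat} (W : 'rV[R]_d -> 'rV[R]_d -> R)
  (x y : 'rV[R]_d) : 'rV[R]_d := grad (fun z => W z y) x.

Definition Upot {R : realType} {N d : nat} (eps : R) (V : 'rV[R]_d -> R)
  (W : 'rV[R]_d -> 'rV[R]_d -> R) (x : 'M[R]_(N, d)) : R :=
  \sum_(i < N) (V (row i x) +
     eps / (2 * N%:R) * \sum_(j < N) W (row i x) (row j x)).

Definition gradU {R : realType} {N d : nat} (U : 'M[R]_(N, d) -> R)
  (x : 'M[R]_(N, d)) : 'M[R]_(N, d) :=
  \matrix_(i < N, k < d) ('D_(delta_mx i k) U x).

Definition tnorm2 {R : realType} {d : nat} (Le : R) (a b : 'rV[R]_d) : R :=
  sqnorm a + Le^-1 * sqnorm b.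

Definition is_flow {R : realType} {N d : nat} (U : 'M[R]_(N, d) -> R)
  (x v : 'M[R]_(N, d)) (q p : R -> 'M[R]_(N, d)) : Prop :=
  q 0 = x /\ p 0 = v /\
  (forall t : R, is_derive t 1 q (p t)) /\
  (forall t : R, is_derive t 1 p (- gradU U (q t))).

From HB Require Import structures.
From mathcomp Require Import all_boot all_order all_algebra.
From mathcomp Require Import all_classical all_reals all_analysis.
From mathcomp Require Import ring lra.
Import Order.TTheory GRing.Theory Num.Theory.
Import numFieldNormedType.Exports.
Local Open Scope classical_set_scope.
Local Open Scope ring_scope.

(* Write e_l(t) = |q_l^1 - q_l^2|^2 + L_e^-1 |p_l^1 - p_l^2|^2 for the gap between the
   two flows on particle l, and E = sum_l e_l.  Differentiating, the force difference
   on particle l is bounded by (L + eps Lt) times its own position gap plus eps Lt times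
   the mean position gap, and Cauchy-Schwarz and Young's inequality give
   e_l' <= 2 sqrt(L_e) e_l + sqrt(L_e) / (2N) E.  Summing, E' <= 5/2 sqrt(L_e) E, so
   E(t) <= exp(5/2 sqrt(L_e) t) E(0) by Gronwall; feeding this back into the bound on
   e_l gives e_l(s) <= exp(2 sqrt(L_e) s) (e_l(0) + (exp(sqrt(L_e) s / 2) - 1) E(0) / N).
   Summing the suprema over [0, h] yields exp(5/2 sqrt(L_e) h) E(0), and
   exp(5x/2) <= 1 + 7x for 0 <= x <= 1/3, which is where L_e h^2 <= 1/9 enters. *)

Section EuclideanNorm.
Context {R : realType}.

Lemma cauchy_schwarz n (a b : 'I_n -> R) :
  (\sum_(i < n) a i * b i) ^+ 2 <=
  (\sum_(i < n) a i ^+ 2) * (\sum_(i < n) b i ^+ 2).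
Proof.
set A := \sum_(i < n) a i ^+ 2; set B := \sum_(i < n) a i * b i.
set C := \sum_(i < n) b i ^+ 2.
have A_ge0 : 0 <= A by apply: sumr_ge0 => i _; exact: sqr_ge0.
have sum_sq : \sum_(i < n) (A * b i - B * a i) ^+ 2 = A * (A * C - B ^+ 2).
  transitivity (\sum_(i < n) (A ^+ 2 * b i ^+ 2)
    - \sum_(i < n) (2 * A * B * (a i * b i)) + \sum_(i < n) (B ^+ 2 * a i ^+ 2)).
    by rewrite -sumrB -big_split; apply: eq_bigr => i _ /=; ring.
  by rewrite -!mulr_sumr -/A -/B -/C; ring.
have : 0 <= A * (A * C - B ^+ 2).
  by rewrite -sum_sq; apply: sumr_ge0 => i _; exact: sqr_ge0.
have [A0|A_neq0] := eqVneq A 0; last first.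
  by rewrite pmulr_rge0 ?subr_ge0 // lt_neqAle eq_sym A_neq0.
have a0 i : a i = 0.
  by apply/eqP; rewrite -sqrf_eq0; apply/eqP/(psumr_eq0P _ A0) => // j _; exact: sqr_ge0.
by rewrite /B big1 ?expr0n ?A0 ?mul0r // => i _; rewrite a0 mul0r.
Qed.

Lemma sqr_mean_le n (x : 'I_n -> R) :
  ((\sum_(i < n) x i) / n%:R) ^+ 2 <= (\sum_(i < n) x i ^+ 2) / n%:R.
Proof.
have [n0|n_gt0] := posnP n.
  have -> : (n%:R : R) = 0 by rewrite n0.
  by rewrite !invr0 !mulr0 expr0n.
have n_pos : (0 : R) < n%:R by rewrite ltr0n.
rewrite expr_div_n ler_pdivrMr ?exprn_gt0 // expr2 mulrA divfK ?gt_eqF //.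
have := cauchy_schwarz _ x (fun=> 1).
by under eq_bigr => i _ do rewrite mulr1; rewrite expr1n sumr_const card_ord.
Qed.

Definition dotv {d : nat} (a b : 'rV[R]_d) : R := \sum_(k < d) a 0 k * b 0 k.

Context {d : nat}.
Implicit Types a b : 'rV[R]_d.

Lemma sqnorm_ge0 a : 0 <= sqnorm a.
Proof. by apply: sumr_ge0 => i _; exact: sqr_ge0. Qed.

Lemma enorm_ge0 a : 0 <= enorm a.
Proof. exact: sqrtr_ge0. Qed.

Lemma sqr_enorm a : enorm a ^+ 2 = sqnorm a.
Proof. by rewrite sqr_sqrtr // sqnorm_ge0. Qed.

Lemma sqnormD a b : sqnorm (a + b) = sqnorm a + sqnorm b + 2 * dotv a b.
Proof.
rewrite /sqnorm /dotv mulr_sumr -!big_split; apply: eq_bigr => k _ /=.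
by rewrite !mxE; ring.
Qed.

Lemma norm_dotv_le a b : `|dotv a b| <= enorm a * enorm b.
Proof.
rewrite -ler_sqr ?nnegrE ?mulr_ge0 ?enorm_ge0 // real_normK ?num_real //.
by rewrite exprMn !sqr_enorm; exact: cauchy_schwarz.
Qed.

Lemma dotv_le a b : dotv a b <= enorm a * enorm b.
Proof. exact: le_trans (ler_norm _) (norm_dotv_le a b). Qed.

Lemma enormD a b : enorm (a + b) <= enorm a + enorm b.
Proof.
rewrite -ler_sqr ?nnegrE ?addr_ge0 ?enorm_ge0 // sqr_enorm sqnormD sqrrD !sqr_enorm.
by have := dotv_le a b; lra.
Qed.

Lemma enormZ c a : enorm (c *: a) = `|c| * enorm a.
Proof.
rewrite /enorm -sqrtr_sqr -sqrtrM ?sqr_ge0 //; congr Num.sqrt.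
by rewrite /sqnorm mulr_sumr; apply: eq_bigr => k _; rewrite mxE; ring.
Qed.

Lemma enormN a : enorm (- a) = enorm a.
Proof. by rewrite -scaleN1r enormZ normrN normr1 mul1r. Qed.

Lemma enorm_sum n (F : 'I_n -> 'rV[R]_d) :
  enorm (\sum_(i < n) F i) <= \sum_(i < n) enorm (F i).
Proof.
elim/big_ind2 : _ => [|x1 x2 y1 y2 le1 le2|i _]; last by [].
  by rewrite /enorm /sqnorm big1 ?sqrtr0 // => k _; rewrite mxE expr0n.
exact: le_trans (enormD _ _) (lerD le1 le2).
Qed.

End EuclideanNorm.

Section Calculus.
Context {R : realType}.

Lemma is_derive_entry m n (f : R -> 'M[R]_(m, n)) (t : R)
    (f' : 'M[R]_(m, n)) i j :
  is_derive t 1 f f' -> is_derive t 1 (fun s => f s i j) (f' i j).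
Proof.
move=> [df <-].
set q := fun h : R => h^-1 *: ((f \o shift t) (h *: 1) - f t).
have entry_cvg := continuous_cvg _ (@coord_continuous R m n i j _) df.
have q_entry : (fun h : R => h^-1 *: (((fun s => f s i j) \o shift t) (h *: 1) - f t i j))
    = (fun M : 'M[R]_(m, n) => M i j) \o q.
  by apply/funext => h /=; rewrite !mxE.
have dfij : derivable (fun s => f s i j) t 1.
  by rewrite /derivable q_entry; apply/cvg_ex; eexists; exact: entry_cvg.
apply: DeriveDef => //; rewrite /derive q_entry.
by apply: cvg_lim; [exact: norm_hausdorff | exact: entry_cvg].
Qed.

Lemma is_derive_sqnorm d (g : R -> 'rV[R]_d) (t : R) (g' : 'rV[R]_d) :
  (forall k, is_derive t 1 (fun s => g s 0 k) (g' 0 k)) ->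
  is_derive t 1 (fun s => sqnorm (g s)) (2 * dotv (g t) g').
Proof.
move=> dg.
have -> : (fun s => sqnorm (g s)) = \sum_(k < d) (fun s => g s 0 k) ^+ 2.
  by apply/funext => s; rewrite fct_sumE.
apply: is_derive_eq.
rewrite /dotv mulr_sumr; apply: eq_bigr => k _.
by rewrite /GRing.scale /=; ring.
Qed.

Lemma is_derive_comp_affine {U V W : normedModType R} {f : V -> W}
    {A : U -> V} {x v : U} (v' : V) {df : W} :
  (forall h : R, A (h *: v + x) = h *: v' + A x) ->
  is_derive (A x) v' f df -> is_derive x v (f \o A) df.
Proof.
move=> A_affine [fd fd'].
have quotient_eq : (fun h : R => h^-1 *: (((f \o A) \o shift x) (h *: v) - (f \o A) x)) =
         (fun h : R => h^-1 *: ((f \o shift (A x)) (h *: v') - f (A x))).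
  by apply/funext => h /=; rewrite A_affine.
by split; rewrite /derivable /derive quotient_eq.
Qed.

Lemma is_derive_differentiable (U V : normedModType R) (f : U -> V) x v :
  differentiable f x -> is_derive x v f ('d f x v).
Proof. by move=> df; split; [exact: diff_derivable | rewrite deriveE]. Qed.

Lemma is_derive_expRM (c t : R) :
  is_derive t 1 (fun s => expR (c * s)) (c * expR (c * t)).
Proof.
have dlin : is_derive t 1 (fun s : R => c * s) c.
  by apply: is_derive_eq (is_deriveZ c (is_derive_id t 1)) _; rewrite /GRing.scale /= mulr1.
by rewrite mulrC; exact: (is_derive1_comp (is_derive_expR _) dlin).
Qed.

Lemma le_init_of_derive_le0 {f f' : R -> R} :
  (forall t : R, is_derive t 1 f (f' t)) -> (forall t, 0 < t -> f' t <= 0) ->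
  forall s, 0 <= s -> f s <= f 0.
Proof.
move=> df f'_le0 s s0.
apply: (@ler0_derive1_nincr _ f 0 s) => //.
- move=> x; rewrite in_itv /= => /andP [x_gt0 _].
  by rewrite derive1E derive_val; exact: f'_le0.
- by apply: derivable_within_continuous => x _; have [] := df x.
Qed.

Lemma gronwall_exp {f f' : R -> R} (c k b : R) : k != c ->
  (forall t : R, is_derive t 1 f (f' t)) ->
  (forall t, 0 < t -> f' t <= c * f t + b * expR (k * t)) ->
  forall s, 0 <= s ->
  f s <= expR (c * s) * (f 0 + b / (k - c) * (expR ((k - c) * s) - 1)).
Proof.
move=> k_neq_c df f'_le s s0.
have kc_neq0 : k - c != 0 by rewrite subr_eq0.
pose g t := expR (- c * t) * f t - b / (k - c) * expR ((k - c) * t).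
have dg (t : R) : is_derive t 1 g (expR (- c * t) * (f' t - c * f t - b * expR (k * t))).
  have d1 := is_deriveM (is_derive_expRM (- c) t) (df t).
  have d2 := is_deriveZ (b / (k - c)) (is_derive_expRM (k - c) t).
  apply: is_derive_eq (is_deriveB d1 d2) _.
  have -> : (k - c) * t = k * t + - c * t by ring.
  by rewrite expRD /GRing.scale /=; field.
have g_le0 : forall t, 0 < t -> expR (- c * t) * (f' t - c * f t - b * expR (k * t)) <= 0.
  by move=> t t_gt0; rewrite pmulr_rle0 ?expR_gt0 //; have := f'_le t t_gt0; lra.
have := le_init_of_derive_le0 dg g_le0 s s0.
rewrite /g !mulr0 expR0 mul1r mulr1 => gs_le.
have -> : f s = expR (c * s) * (expR (- c * s) * f s).
  by rewrite mulrA -expRD mulNr addrN expR0 mul1r.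
by rewrite ler_pM2l ?expR_gt0 // mulrBr mulr1; lra.
Qed.

Lemma gronwall {f f' : R -> R} (c : R) :
  (forall t : R, is_derive t 1 f (f' t)) -> (forall t, 0 < t -> f' t <= c * f t) ->
  forall s, 0 <= s -> f s <= expR (c * s) * f 0.
Proof.
move=> df f'_le s s0.
have c1_neq_c : c + 1 != c by rewrite -subr_eq0 addrAC subrr add0r oner_neq0.
have := gronwall_exp c (c + 1) 0 c1_neq_c df _ s s0; rewrite mul0r mul0r addr0; apply.
by move=> t t_gt0; rewrite mul0r addr0; exact: f'_le.
Qed.

End Calculus.

Lemma row_delta_mx (R : pzSemiRingType) m n (i i0 : 'I_m) (k : 'I_n) :
  row i0 (delta_mx i k : 'M[R]_(m, n)) = if i0 == i then delta_mx 0 k else 0.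
Proof.
apply/matrixP => a b; case: (i0 =P i) => [->|/eqP/negbTE i0_neq_i].
  by rewrite !mxE eqxx ord1 eqxx.
by rewrite !mxE i0_neq_i.
Qed.

Section Potential.
Context {R : realType} {N d : nat} (eps : R) (V : 'rV[R]_d -> R)
  (W : 'rV[R]_d -> 'rV[R]_d -> R).
Let W' := fun w : 'rV[R]_d * 'rV[R]_d => W w.1 w.2.
Hypothesis dV : forall x, differentiable V x.
Hypothesis dW : forall z, differentiable W' z.
Hypothesis W_sym : forall x y, W x y = W y x.

Lemma is_derive_Upot (x e : 'M[R]_(N, d)) :
  is_derive x e (Upot eps V W)
   (\sum_(i < N) ('d V (row i x) (row i e) + eps / (2 * N%:R) *
       \sum_(j < N) 'd W' (row i x, row j x) (row i e, row j e))).
Proof.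
have -> : Upot eps V W = \sum_(i < N) ((V \o row i) +
   (eps / (2 * N%:R)) \*: \sum_(j < N) (W' \o (fun x => (row i x, row j x)))).
  by apply/funext => y; rewrite /Upot fct_sumE; apply: eq_bigr => i _; rewrite /= fct_sumE.
apply: is_derive_sum => i; apply: is_deriveD.
  apply: (is_derive_comp_affine (row i e)).
    by move=> h; rewrite linearD linearZ.
  exact: is_derive_differentiable.
apply: is_deriveZ; apply: is_derive_sum => j.
apply: (is_derive_comp_affine (row i e, row j e)).
  by move=> h; rewrite !linearD !linearZ.
exact: is_derive_differentiable.
Qed.

Lemma diffW_first p q a : 'd W' (p, q) (a, 0) = 'D_a (fun y => W y q) p.
Proof.
have dWq : is_derive p a (W' \o (fun y => (y, q))) ('d W' (p, q) (a, 0)).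
  apply: (is_derive_comp_affine (a, 0)).
    by move=> h /=; apply/pair_equal_spec; split => //=; rewrite scaler0 add0r.
  exact: is_derive_differentiable.
by have [_ <-] := dWq.
Qed.

Lemma diffW_second p q b : 'd W' (p, q) (0, b) = 'D_b (fun y => W y p) q.
Proof.
have dWp : is_derive q b (W' \o (fun y => (p, y))) ('d W' (p, q) (0, b)).
  apply: (is_derive_comp_affine (0, b)).
    by move=> h /=; apply/pair_equal_spec; split => //=; rewrite scaler0 add0r.
  exact: is_derive_differentiable.
have [_ <-] := dWp; congr derive.
by apply/funext => y; rewrite /W' /= W_sym.
Qed.

Lemma gradU_entry (x : 'M[R]_(N, d)) i k :
  gradU (Upot eps V W) x i k = grad V (row i x) 0 k +
     eps / N%:R * \sum_(j < N) grad1 W (row i x) (row j x) 0 k.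
Proof.
rewrite /gradU mxE; have [_ ->] := is_derive_Upot x (delta_mx i k).
set g := fun j => grad1 W (row i x) (row j x) 0 k.
have dV_delta i0 : 'd V (row i0 x) (row i0 (delta_mx i k : 'M[R]_(N, d))) =
    if i0 == i then grad V (row i x) 0 k else 0.
  rewrite row_delta_mx; case: eqP => [->|_]; last by rewrite linear0.
  by rewrite mxE (deriveE _ (dV _)).
have dW_delta i0 j : 'd W' (row i0 x, row j x)
     (row i0 (delta_mx i k : 'M[R]_(N, d)), row j (delta_mx i k : 'M[R]_(N, d))) =
    (if i0 == i then g j else 0) + (if j == i then g i0 else 0).
  have -> : (row i0 (delta_mx i k), row j (delta_mx i k)) =
      (row i0 (delta_mx i k), 0) + (0, row j (delta_mx i k)) :> 'rV[R]_d * 'rV[R]_d.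
    by congr pair; rewrite ?addr0 ?add0r.
  rewrite linearD !row_delta_mx.
  by case: (i0 =P i) => [->|_]; case: (j =P i) => [->|_];
    rewrite ?linear0 ?diffW_first ?diffW_second /g /grad1 /grad ?mxE.
have dW_delta_sum i0 : \sum_(j < N) 'd W' (row i0 x, row j x)
     (row i0 (delta_mx i k : 'M[R]_(N, d)), row j (delta_mx i k : 'M[R]_(N, d))) =
    (if i0 == i then \sum_(j < N) g j else 0) + g i0.
  under eq_bigr => j _ do rewrite dW_delta.
  rewrite big_split /= -[in X in _ + X]big_mkcond big_pred1_eq.
  by case: eqP => // _; rewrite big1.
under eq_bigr => i0 _ do rewrite dV_delta dW_delta_sum.
rewrite big_split /= -big_mkcond big_pred1_eq -mulr_sumr big_split /=.
rewrite -big_mkcond big_pred1_eq invfM -/(\sum_(j < N) g j); congr (_ + _).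
have two_neq0 : (2 : R) != 0 by rewrite pnatr_eq0.
by set n := N%:R^-1; field.
Qed.

Lemma row_gradU (x : 'M[R]_(N, d)) i :
  row i (gradU (Upot eps V W) x) =
  grad V (row i x) + (eps / N%:R) *: \sum_(j < N) grad1 W (row i x) (row j x).
Proof. by apply/matrixP => a k; rewrite ord1 mxE gradU_entry !mxE summxE. Qed.

Variables L Lt : R.
Hypothesis eps_ge0 : 0 <= eps.
Hypothesis V_lip : forall x y, enorm (grad V x - grad V y) <= L * enorm (x - y).
Hypothesis W_lip : forall x y xt yt,
  enorm (grad1 W x y - grad1 W xt yt) <= Lt * (enorm (x - xt) + enorm (y - yt)).

Lemma row_gradU_lipschitz (x y : 'M[R]_(N, d)) i :
  enorm (row i (gradU (Upot eps V W) x) - row i (gradU (Upot eps V W) y)) <=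
  (L + eps * Lt) * enorm (row i x - row i y) +
  eps * Lt / N%:R * \sum_(j < N) enorm (row j x - row j y).
Proof.
have N_neq0 : (N%:R : R) != 0 by rewrite pnatr_eq0 -lt0n (leq_ltn_trans _ (ltn_ord i)).
set zi := enorm (row i x - row i y); set S := \sum_(j < N) _.
rewrite !row_gradU opprD addrACA -scalerBr -sumrB.
apply: le_trans (enormD _ _) _.
rewrite enormZ ger0_norm ?divr_ge0 ?ler0n //.
have sum_le : enorm (\sum_(j < N) (grad1 W (row i x) (row j x) - grad1 W (row i y) (row j y)))
    <= Lt * (zi * N%:R + S).
  apply: le_trans (enorm_sum _ _) _.
  apply: le_trans (ler_sum _ (fun j _ => W_lip _ _ _ _)) _.
  by rewrite -mulr_sumr big_split /= sumr_const card_ord mulr_natr.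
have := ler_wpM2l (divr_ge0 eps_ge0 (ler0n _ N)) sum_le.
have -> : eps / N%:R * (Lt * (zi * N%:R + S)) = eps * Lt * zi + eps * Lt / N%:R * S.
  by field.
by have := V_lip (row i x) (row i y); rewrite -/zi; lra.
Qed.

End Potential.

(* With u = Wn / a the claim reads
   2 a^2 Z u + 2 u Dn <= 2 a^2 (Z^2 + u^2) + a^2 m^2 / 2, and after Dn <= A Z + B m the
   difference is a nonnegative combination of (Z - u)^2, (u - m)^2, m^2 and Z^2. *)
Lemma cross_term_le {R : realFieldType} (a A B Z Wn Dn m : R) :
  0 < a -> a ^+ 2 = A + B -> 0 <= B -> B <= A -> 0 <= Z -> 0 <= Wn -> 0 <= m ->
  Dn <= A * Z + B * m ->
  2 * Z * Wn + 2 * (a ^+ 2)^-1 * Wn * Dn <=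
  2 * a * (Z ^+ 2 + (a ^+ 2)^-1 * Wn ^+ 2) + a / 2 * m ^+ 2.
Proof.
move=> a_gt0 sqr_a B_ge0 B_le_A Z_ge0 Wn_ge0 m_ge0 Dn_le.
have a_neq0 : a != 0 by rewrite gt_eqF.
set u := Wn / a; have -> : Wn = a * u by rewrite /u mulrC divfK.
have u_ge0 : 0 <= u by rewrite divr_ge0 // ltW.
have -> : 2 * Z * (a * u) + 2 * (a ^+ 2)^-1 * (a * u) * Dn =
    a^-1 * (2 * a ^+ 2 * Z * u + 2 * u * Dn) by field.
have -> : 2 * a * (Z ^+ 2 + (a ^+ 2)^-1 * (a * u) ^+ 2) + a / 2 * m ^+ 2 =
    a^-1 * (2 * a ^+ 2 * (Z ^+ 2 + u ^+ 2) + a ^+ 2 / 2 * m ^+ 2) by field.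
rewrite ler_pM2l ?invr_gt0 // sqr_a.
have := ler_wpM2l (mulr_ge0 (ler0n _ 2) u_ge0) Dn_le.
have : 0 <= (2 * A + B) * (Z - u) ^+ 2 by rewrite mulr_ge0 ?sqr_ge0 //; lra.
have : 0 <= B * (u - m) ^+ 2 by rewrite mulr_ge0 ?sqr_ge0.
have : 0 <= (A - B) * m ^+ 2 by rewrite mulr_ge0 ?sqr_ge0 // subr_ge0.
have : 0 <= B * Z ^+ 2 by rewrite mulr_ge0 ?sqr_ge0.
nra.
Qed.

Lemma expR_le_inv_subr {R : realType} (y : R) : y < 1 -> expR y <= (1 - y)^-1.
Proof.
move=> y_lt1; rewrite -div1r ler_pdivlMr ?subr_gt0 // mulrC.
have := ler_wpM2r (expR_ge0 y) (expR_ge1Dx (- y)).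
by rewrite -expRD addNr expR0.
Qed.

Lemma expR_five_halves_le {R : realType} (x : R) : 0 <= x -> x <= 3^-1 ->
  expR (5 / 2 * x) <= 1 + 7 * x.
Proof.
move=> x_ge0 x_le; set y := 5 / 4 * x.
have y_lt1 : y < 1 by rewrite /y; lra.
have -> : 5 / 2 * x = y + y by rewrite /y; field.
have expRy_le := expR_le_inv_subr _ y_lt1.
rewrite expRD; apply: le_trans (ler_pM (expR_ge0 _) (expR_ge0 _) expRy_le expRy_le) _.
rewrite -invfM -div1r ler_pdivrMr ?mulr_gt0 ?subr_gt0 // /y.
nra.
Qed.

Section GapEstimate.
Context {R : realType} {N d : nat}.
Variables (Le A B : R) (G : 'M[R]_(N, d) -> 'M[R]_(N, d))
  (q1 p1 q2 p2 : R -> 'M[R]_(N, d)).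
Hypothesis Le_def : Le = A + B.
Hypothesis B_ge0 : 0 <= B.
Hypothesis B_le_A : B <= A.
Hypothesis Le_gt0 : 0 < Le.
Hypothesis dq1 : forall t : R, is_derive t 1 q1 (p1 t).
Hypothesis dq2 : forall t : R, is_derive t 1 q2 (p2 t).
Hypothesis dp1 : forall t : R, is_derive t 1 p1 (- G (q1 t)).
Hypothesis dp2 : forall t : R, is_derive t 1 p2 (- G (q2 t)).
Hypothesis G_lip : forall x y i, enorm (row i (G x) - row i (G y)) <=
  A * enorm (row i x - row i y) + B / N%:R * \sum_(j < N) enorm (row j x - row j y).

Let a := Num.sqrt Le.
Let qgap l t := row l (q1 t) - row l (q2 t).
Let pgap l t := row l (p1 t) - row l (p2 t).
Let Ggap l t := row l (G (q1 t)) - row l (G (q2 t)).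

Definition gap (l : 'I_N) (t : R) := tnorm2 Le (qgap l t) (pgap l t).
Definition total_gap (t : R) := \sum_(l < N) gap l t.
Definition gap' (l : 'I_N) (t : R) :=
  2 * dotv (qgap l t) (pgap l t) + Le^-1 * (2 * dotv (pgap l t) (- Ggap l t)).

Lemma is_derive_gap (l : 'I_N) (t : R) : is_derive t 1 (gap l) (gap' l t).
Proof.
have row_gap (f g : R -> 'M[R]_(N, d)) (f' g' : 'M[R]_(N, d)) :
    is_derive t 1 f f' -> is_derive t 1 g g' -> forall k,
    is_derive t 1 (fun s => (row l (f s) - row l (g s)) 0 k) ((row l f' - row l g') 0 k).
  move=> df dg k; have -> : (fun s => (row l (f s) - row l (g s)) 0 k) =
      (fun s => f s l k - g s l k) by apply/funext => s; rewrite !mxE.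
  by rewrite !mxE; apply: is_deriveB; exact: is_derive_entry.
apply: is_deriveD; first by apply: is_derive_sqnorm; exact: row_gap.
have -> : - Ggap l t = row l (- G (q1 t)) - row l (- G (q2 t)).
  by rewrite /Ggap !raddfN opprD.
by apply: is_deriveZ; apply: is_derive_sqnorm; exact: row_gap.
Qed.

Lemma sqrt_Le_gt0 : 0 < a.
Proof. by rewrite sqrtr_gt0. Qed.

Lemma gap_ge0 l t : 0 <= gap l t.
Proof. by rewrite addr_ge0 ?mulr_ge0 ?sqnorm_ge0 // invr_ge0 ltW. Qed.

Lemma total_gap_ge0 t : 0 <= total_gap t.
Proof. by apply: sumr_ge0 => l _; exact: gap_ge0. Qed.

Lemma gap'_le l t : gap' l t <= 2 * a * gap l t + a / (2 * N%:R) * total_gap t.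
Proof.
have a_gt0 := sqrt_Le_gt0.
have sqr_a : a ^+ 2 = Le by rewrite sqr_sqrtr // ltW.
have N_gt0 : (0 : R) < N%:R by rewrite ltr0n (leq_ltn_trans _ (ltn_ord l)).
set Z := enorm (qgap l t); set Wn := enorm (pgap l t); set Dn := enorm (Ggap l t).
set m := (\sum_(j < N) enorm (qgap j t)) / N%:R.
have m_ge0 : 0 <= m by rewrite divr_ge0 ?sumr_ge0 // => j _; exact: enorm_ge0.
have Dn_le : Dn <= A * Z + B * m by rewrite /m mulrA -[B * _ / _]mulrAC; exact: G_lip.
have dot_qp : dotv (qgap l t) (pgap l t) <= Z * Wn by exact: dotv_le.
have dot_pG : dotv (pgap l t) (- Ggap l t) <= Wn * Dn.
  by rewrite -[Dn](enormN (Ggap l t)); exact: dotv_le.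
have Le_inv_ge0 : 0 <= Le^-1 by rewrite invr_ge0 ltW.
have gap'_le_cross : gap' l t <= 2 * Z * Wn + 2 * (a ^+ 2)^-1 * Wn * Dn.
  by rewrite /gap' sqr_a; nra.
have := @cross_term_le _ a A B Z Wn Dn m a_gt0 (etrans sqr_a Le_def) B_ge0 B_le_A
  (enorm_ge0 _) (enorm_ge0 _) m_ge0 Dn_le.
have gap_eq : gap l t = Z ^+ 2 + (a ^+ 2)^-1 * Wn ^+ 2 by rewrite /gap /tnorm2 !sqr_enorm sqr_a.
have m_le : m ^+ 2 <= total_gap t / N%:R.
  apply: le_trans (sqr_mean_le _ _) _; rewrite ler_pM2r ?invr_gt0 //.
  by apply: ler_sum => j _; rewrite sqr_enorm lerDl mulr_ge0 ?sqnorm_ge0.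
have -> : a / (2 * N%:R) * total_gap t = a / 2 * (total_gap t / N%:R).
  by field; rewrite gt_eqF.
have := ler_wpM2l (divr_ge0 (ltW a_gt0) (ler0n _ 2)) m_le.
rewrite gap_eq; lra.
Qed.

Lemma total_gap_le s : 0 <= s -> total_gap s <= expR (5 / 2 * a * s) * total_gap 0.
Proof.
have d_total (t : R) : is_derive t 1 total_gap (\sum_(l < N) gap' l t).
  by rewrite /total_gap -fct_sumE; apply: is_derive_sum => l; exact: is_derive_gap.
move: s; apply: (gronwall _ d_total) => t _.
apply: le_trans (ler_sum _ (fun l _ => gap'_le l t)) _.
rewrite big_split /= -mulr_sumr -/(total_gap t) sumr_const card_ord.
have E_ge0 := total_gap_ge0 t; have a_gt0 := sqrt_Le_gt0.
have mean_term : (a / (2 * N%:R) * total_gap t) *+ N <= a / 2 * total_gap t.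
  have [N0|N_gt0] := posnP N; first by rewrite N0 mulr0n; nra.
  have N_neq0 : (N%:R : R) != 0 by rewrite pnatr_eq0 -lt0n.
  suff -> : (a / (2 * N%:R) * total_gap t) *+ N = a / 2 * total_gap t by [].
  by rewrite -[LHS]mulr_natr; field.
lra.
Qed.

Lemma gap_le l s : 0 <= s ->
  gap l s <= expR (2 * a * s) * (gap l 0 + total_gap 0 / N%:R * (expR (a / 2 * s) - 1)).
Proof.
have a_gt0 := sqrt_Le_gt0.
have N_neq0 : (N%:R : R) != 0 by rewrite pnatr_eq0 -lt0n (leq_ltn_trans _ (ltn_ord l)).
have k_neq_c : 5 / 2 * a != 2 * a by rewrite gt_eqF //; lra.
move=> s_ge0; have := gronwall_exp _ _ (a / (2 * N%:R) * total_gap 0) k_neq_c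
  (is_derive_gap l) _ s s_ge0.
have -> : 5 / 2 * a - 2 * a = a / 2 by field.
have -> : a / (2 * N%:R) * total_gap 0 / (a / 2) = total_gap 0 / N%:R.
  by field; rewrite N_neq0 gt_eqF.
apply => t t_gt0; apply: le_trans (gap'_le l t) _; rewrite lerD2l -[leRHS]mulrA.
rewrite ler_wpM2l ?divr_ge0 ?mulr_ge0 ?ler0n ?(ltW a_gt0) // mulrC.
exact: total_gap_le (ltW t_gt0).
Qed.

Lemma sup_gap_le l h : 0 <= h ->
  sup [set gap l s | s in [set s : R | 0 <= s <= h]] <=
  expR (2 * a * h) * (gap l 0 + total_gap 0 / N%:R * (expR (a / 2 * h) - 1)).
Proof.
have a_gt0 := sqrt_Le_gt0.
move=> h_ge0; apply: ge_sup; first by exists (gap l 0), 0 => //=; rewrite lexx.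
move=> _ [s /andP[s_ge0 s_le_h] <-]; apply: le_trans (gap_le l s s_ge0) _.
have growth_ge0 : 0 <= expR (a / 2 * s) - 1.
  by rewrite subr_ge0 leNgt expR_lt1 -leNgt mulr_ge0 // divr_ge0 // ltW.
apply: ler_pM.
- exact: expR_ge0.
- by rewrite addr_ge0 ?gap_ge0 // mulr_ge0 // divr_ge0 ?total_gap_ge0.
- by rewrite ler_expR ler_wpM2l // mulr_ge0 // ltW.
- rewrite lerD2l ler_wpM2l ?divr_ge0 ?total_gap_ge0 // lerB // ler_expR.
  by rewrite ler_wpM2l // divr_ge0 // ltW.
Qed.

Lemma sum_sup_gap_le_expR h : 0 <= h ->
  \sum_(l < N) sup [set gap l s | s in [set s : R | 0 <= s <= h]] <=
  expR (5 / 2 * a * h) * total_gap 0.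
Proof.
have a_gt0 := sqrt_Le_gt0.
move=> h_ge0; apply: le_trans (ler_sum _ (fun l _ => sup_gap_le l h h_ge0)) _.
rewrite -mulr_sumr big_split /= -/(total_gap 0) sumr_const card_ord.
set c := expR (a / 2 * h) - 1; set E0 := total_gap 0.
have E0_ge0 : 0 <= E0 by exact: total_gap_ge0.
have c_ge0 : 0 <= c.
  by rewrite subr_ge0 leNgt expR_lt1 -leNgt mulr_ge0 // divr_ge0 // ltW.
have mean_term : (E0 / N%:R * c) *+ N <= E0 * c.
  have [N0|N_gt0] := posnP N; first by rewrite N0 mulr0n mulr_ge0.
  suff -> : (E0 / N%:R * c) *+ N = E0 * c by [].
  by rewrite -[LHS]mulr_natr; field; rewrite pnatr_eq0 -lt0n.
apply: le_trans (_ : _ <= expR (2 * a * h) * (E0 + E0 * c)) _.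
  by rewrite ler_wpM2l ?expR_ge0 // lerD2l.
have -> : E0 + E0 * c = expR (a / 2 * h) * E0 by rewrite /c; ring.
have -> : 5 / 2 * a * h = 2 * a * h + a / 2 * h by field.
by rewrite expRD mulrA.
Qed.

Lemma sum_sup_gap_le h : 0 < h -> Le * h ^+ 2 <= 9^-1 ->
  \sum_(l < N) sup [set gap l s | s in [set s : R | 0 <= s <= h]] <=
  (1 + 7 * a * h) * total_gap 0.
Proof.
have a_gt0 := sqrt_Le_gt0.
move=> h_gt0 Leh2_le; have ah_ge0 : 0 <= a * h by rewrite mulr_ge0 ?ltW.
have ah_le : a * h <= 3^-1.
  have : (a * h) ^+ 2 <= 9^-1 by rewrite exprMn sqr_sqrtr // ltW.
  by nra.
apply: le_trans (sum_sup_gap_le_expR h (ltW h_gt0)) _.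
rewrite ler_wpM2r ?total_gap_ge0 //.
by have := expR_five_halves_le _ ah_ge0 ah_le; rewrite !mulrA.
Qed.

End GapEstimate.

Theorem mainTheorem13 (R : realType) (N d : nat) (eps L Lt h : R)
  (V : 'rV[R]_d -> R) (W : 'rV[R]_d -> 'rV[R]_d -> R) :
  0 <= eps -> 0 < L -> 0 <= Lt ->
  (* C^1 regularity *)
  (forall x, differentiable V x) ->
  (forall z : 'rV[R]_d * 'rV[R]_d,
      differentiable (fun w : 'rV[R]_d * 'rV[R]_d => W w.1 w.2) z) ->
  (* (a) *)
  V 0 = 0 -> (forall x, 0 <= V x) ->
  (* (b) *)
  (forall x y, enorm (grad V x - grad V y) <= L * enorm (x - y)) ->
  (* (d) *)
  (forall x y, W x y = W y x) ->
  (forall x y xt yt, enorm (grad1 W x y - grad1 W xt yt)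
                      <= Lt * (enorm (x - xt) + enorm (y - yt))) ->
  let Le := L + 2 * eps * Lt in
  0 < h -> Le * h ^+ 2 <= 9^-1 ->
  forall (x v y u : 'M[R]_(N, d)) (q1 p1 q2 p2 : R -> 'M[R]_(N, d)),
  is_flow (Upot eps V W) x v q1 p1 ->
  is_flow (Upot eps V W) y u q2 p2 ->
  \sum_(l < N)
     sup [set tnorm2 Le (row l (q1 s) - row l (q2 s))
                        (row l (p1 s) - row l (p2 s))
          | s in [set s : R | 0 <= s <= h]]
  <= (1 + 7 * Num.sqrt Le * h) *
     \sum_(l < N) tnorm2 Le (row l x - row l y) (row l v - row l u).
Proof.
move=> eps_ge0 L_gt0 Lt_ge0 dV dW _ _ V_lip W_sym W_lip Le h_gt0 Leh2_le x v y u
  q1 p1 q2 p2 [<- [<- [dq1 dp1]]] [<- [<- [dq2 dp2]]].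
have epsLt_ge0 := mulr_ge0 eps_ge0 Lt_ge0.
have Le_def : Le = (L + eps * Lt) + eps * Lt by rewrite /Le; ring.
have Le_gt0 : 0 < Le by rewrite Le_def; lra.
have B_le_A : eps * Lt <= L + eps * Lt by lra.
have G_lip := @row_gradU_lipschitz R N d eps V W dV dW W_sym L Lt eps_ge0 V_lip W_lip.
exact: (@sum_sup_gap_le R N d Le (L + eps * Lt) (eps * Lt) (gradU (Upot eps V W))
  q1 p1 q2 p2 Le_def epsLt_ge0 B_le_A Le_gt0 dq1 dq2 dp1 dp2 G_lip h h_gt0 Leh2_le).
Qed.
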